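(* Assume the setting below and suppose $\tau\le0$ and $|x_0^{(1)}|>a$. Let $r_0=\lceil\log_2(|x_0^{(1)}|/a)\rceil$. Then (with probability one) there is $j\le r_0$ such that $|x_j^{(1)}|<a$, and moreover $|x_k^{(1)}|<a$ for all $k\ge j$.
   Context: Let $n\ge2$, $a\ge\sqrt{n-1}$, $f(x)=a|x^{(1)}|+\sum_{i=2}^n x^{(i)}$ on $\mathbb{R}^n$ ($x^{(i)}$ the $i$-th coordinate), $0<c_1<c_2<1$, and $\tau=c_1+\frac{(n-1)(c_1-1)}{a^2}$. The initial point $x_0$ is drawn from the normal distribution on $\mathbb{R}^n$ (independently of $a$), and $x_{k+1}=x_k+t_kd_k$, $d_k=-\nabla f(x_k)$, where $t_k$ is returned by the following Armijo–Wolfe bracketing line search: set $\alpha=0$, $\beta=+\infty$, $t=1$; repeat: if $A(t)$ fails set $\beta\leftarrow t$; else if $W(t)$ fails set $\alpha\leftarrow t$; else stop and return $t$; then if $\beta<+\infty$ set $t\leftarrow(\alpha+\beta)/2$, otherwise $t\leftarrow2\alpha$. Here $A(t)$: $f(x_k+td_k)\le f(x_k)+c_1t\nabla f(x_k)^Td_k$, and $W(t)$: $f$ is differentiable at $x_k+td_k$ and $\nabla f(x_k+td_k)^Td_k\ge c_2\nabla f(x_k)^Td_k$. All statements are understood to hold with probability one. *)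

From HB Require Import structures.
From mathcomp Require Import all_boot all_order all_algebra.
From mathcomp Require Import all_classical all_reals all_analysis.
Set Implicit Arguments. Unset Strict Implicit. Unset Printing Implicit Defensive.
Import Order.TTheory GRing.Theory Num.Theory.
Import numFieldNormedType.Exports.
Local Open Scope classical_set_scope.
Local Open Scope ring_scope.

(* R^n is represented by row vectors 'rV[R]_n (a normed module, so that
   library differentiability 'differentiable' and differential ''d' apply). *)

(* The first coordinate x^(1) of x (index 0; for n >= 1 the sum has exactly one term). *)
Definition coord1 {R : realType} {n : nat} (x : 'rV[R]_n) : R :=
  \sum_(i < n | val i == 0%N) x 0 i.

Definition fa {R : realType} {n : nat} (a : R) (x : 'rV[R]_n) : R :=
  \sum_(i < n) (if val i == 0%N then a * `|x 0 i| else x 0 i).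

Definition grad {R : realType} {n : nat} (f : 'rV[R]_n -> R) (x : 'rV[R]_n)
  : 'rV[R]_n := \row_j ('d f x (delta_mx 0 j)).

(* Armijo condition A(t) at x along d, where grad f(x)^T d = 'd f x d *)
Definition armijo {R : realType} {n : nat} (f : 'rV[R]_n -> R) (c1 : R)
  (x d : 'rV[R]_n) (t : R) : Prop :=
  f (x + t *: d) <= f x + c1 * t * ('d f x d).

Definition wolfe {R : realType} {n : nat} (f : 'rV[R]_n -> R) (c2 : R)
  (x d : 'rV[R]_n) (t : R) : Prop :=
  differentiable f (x + t *: d) /\ 'd f (x + t *: d) d >= c2 * ('d f x d).

(* One iteration of the bracketing line search on a state (alpha, beta, t),
   beta = None meaning beta = +oo.  (Only used when the stopping test fails.) *)
Definition ls_next {R : realType} {n : nat} (f : 'rV[R]_n -> R) (c1 : R)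
  (x d : 'rV[R]_n) (s : R * option R * R) : R * option R * R :=
  let: (al, be, t) := s in
  let: (al', be') := if `[< armijo f c1 x d t >] then (t, be) else (al, Some t) in
  (al', be', match be' with Some b => (al' + b) / 2 | None => 2 * al' end).

Definition ls_state {R : realType} {n : nat} (f : 'rV[R]_n -> R) (c1 : R)
  (x d : 'rV[R]_n) (k : nat) : R * option R * R :=
  iter k (ls_next f c1 x d) (0, None, 1).

Definition ls_t {R : realType} {n : nat} (f : 'rV[R]_n -> R) (c1 : R)
  (x d : 'rV[R]_n) (k : nat) : R := (ls_state f c1 x d k).2.

Definition ls_returns {R : realType} {n : nat} (f : 'rV[R]_n -> R) (c1 c2 : R)
  (x d : 'rV[R]_n) (t : R) : Prop :=
  exists k : nat,
    [/\ ls_t f c1 x d k = t, armijo f c1 x d t, wolfe f c2 x d t &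
        forall j : nat, (j < k)%N ->
          ~ (armijo f c1 x d (ls_t f c1 x d j) /\ wolfe f c2 x d (ls_t f c1 x d j))].

Definition gd_iterates {R : realType} {n : nat} (f : 'rV[R]_n -> R) (c1 c2 : R)
  (x0 : 'rV[R]_n) (xs : nat -> 'rV[R]_n) : Prop :=
  xs 0%N = x0 /\
  forall k : nat, differentiable f (xs k) /\
    exists t : R, ls_returns f c1 c2 (xs k) (- grad f (xs k)) t /\
                  xs k.+1 = xs k + t *: (- grad f (xs k)).

(* Standard Gaussian measure on R^n (n-tuples) as iterated integral
   against the 1-d standard normal probability (Tonelli: equals the
   product measure on measurable sets). *)
Fixpoint gauss_int {R : realType} (n : nat) : (n.-tuple R -> \bar R) -> \bar R :=
  match n as m return (m.-tuple R -> \bar R) -> \bar R with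
  | 0%N => fun g => g [tuple]
  | m.+1 => fun g =>
      (\int[normal_prob (0:R) 1]_x gauss_int (fun t : m.-tuple R => g (cons_tuple x t)))%E
  end.

Definition gauss_null {R : realType} (n : nat) (N : set (n.-tuple R)) : Prop :=
  exists M : set (n.-tuple R),
    [/\ measurable M, N `<=` M & gauss_int (fun t => (\1_M t)%:E) = 0%E].

Definition row_of_tuple {R : realType} {n : nat} (t : n.-tuple R) : 'rV[R]_n :=
  \row_i tnth t i.

From HB Require Import structures.
From mathcomp Require Import all_boot all_order all_algebra.
From mathcomp Require Import all_classical all_reals all_analysis.
From mathcomp Require Import lra ring.
Import Order.TTheory GRing.Theory Num.Theory.
Import numFieldNormedType.Exports.
Local Open Scope classical_set_scope.
Local Open Scope ring_scope.

(* Off the hyperplane x^(1) = 0 the function f is linear, so along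
   d = -grad f(x) the map t |-> f(x + t d) is piecewise linear with a single
   kink at v = |x^(1)|/a.  Since a^2 >= n - 1 and tau <= 0, the weak Wolfe
   condition holds exactly for t > v and the Armijo condition holds on [0, v)
   and on (v, 2v].  All trial steps of the bracketing search are dyadic, while
   for almost every x_0 no ratio x_k^(1)/a is dyadic, so no trial hits the
   kink: for v > 1 the search doubles up to the power of 2 in (v, 2v), for
   v < 1 it returns some t in (v, 1].  Either way v < 2^(p+1) gives
   |v - t| < 2^p, so |x_k^(1)|/a < 2^(p - k), which is below 1 from
   k = ceil(log2 v_0) on. *)

Lemma gauss_int_cst (R : realType) (n : nat) (c : \bar R) :
  @gauss_int R n (fun _ => c) = c.
Proof.
elim: n => [//|n IH] /=.
by rewrite IH integral_cst //= probability_setT mule1.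
Qed.

Lemma gauss_null_tnth0 (R : realType) (n : nat) (C : set R) :
  countable C -> @gauss_null R n.+1 [set t | C (tnth t ord0)].
Proof.
move=> cC.
have mC : measurable C by apply: countable_measurable => // t; exact: measurable_set1.
exists [set t | C (tnth t ord0)]; split => //.
  by have := @measurable_tnth _ R n.+1 ord0 measurableT C mC; rewrite setTI.
transitivity (\int[normal_prob (0:R) 1]_x (\1_C x)%:E)%E.
  apply: eq_integral => x _; rewrite -[RHS](@gauss_int_cst R n).
  by congr gauss_int; apply: funext => t; rewrite /indic /= /in_mem.
rewrite integral_indic // setIT.
apply: ((null_content_dominatesP _ _).1 (@normal_prob_dominates R 0 1)) mC _.
exact: countable_lebesgue_measure0.
Qed.

Lemma gauss_nullS {R : realType} {n : nat} {A B : set (n.-tuple R)} :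
  A `<=` B -> gauss_null B -> gauss_null A.
Proof. by move=> AB [M [mM BM M0]]; exists M; split => //; exact: subset_trans BM. Qed.

Definition dyadic {R : numFieldType} (q : R) : Prop :=
  exists (z : int) (k : nat), q = z%:~R / 2 ^+ k.

Section dyadic.
Variable R : realFieldType.
Implicit Types p q : R.

Lemma dyadic_int (z : int) : dyadic (z%:~R : R).
Proof. by exists z, 0%N; rewrite expr0 divr1. Qed.

Lemma dyadic_nat (k : nat) : dyadic (k%:R : R).
Proof. by have := dyadic_int k; rewrite pmulrn. Qed.

Lemma dyadic0 : dyadic (0 : R).
Proof. exact: dyadic_nat 0. Qed.

Lemma dyadic1 : dyadic (1 : R).
Proof. exact: dyadic_nat 1. Qed.

Lemma dyadic_pow2 (k : nat) : dyadic ((2 : R) ^+ k).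
Proof. by rewrite -natrX; exact: dyadic_nat. Qed.

Lemma dyadicD p q : dyadic p -> dyadic q -> dyadic (p + q).
Proof.
move=> [z1 [k1 ->]] [z2 [k2 ->]].
exists (z1 * 2 ^+ k2 + z2 * 2 ^+ k1), (k1 + k2)%N.
have two_k k : (2 : R) ^+ k != 0 by rewrite expf_neq0 // pnatr_eq0.
rewrite intrD !intrM !rmorphXn /= exprD.
by field; rewrite !two_k.
Qed.

Lemma dyadicM p q : dyadic p -> dyadic q -> dyadic (p * q).
Proof.
move=> [z1 [k1 ->]] [z2 [k2 ->]]; exists (z1 * z2), (k1 + k2)%N.
by rewrite intrM exprD invfM mulrACA.
Qed.

Lemma dyadic_half p : dyadic p -> dyadic (p / 2).
Proof. by move=> [z [k ->]]; exists z, k.+1; rewrite exprSr invfM mulrA. Qed.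

Lemma dyadic_sg p : dyadic (Num.sg p).
Proof.
have [_|_|_] := sgrP p; [exact: dyadic0 | exact: dyadic1 |].
by have := dyadic_int (-1); rewrite mulrN1z.
Qed.

Lemma dyadic_norm p : dyadic `|p| -> dyadic p.
Proof. by move=> dp; rewrite [p]numEsg; apply: dyadicM dp; exact: dyadic_sg. Qed.

End dyadic.

Lemma countable_dyadic (R : numFieldType) : countable (@dyadic R).
Proof.
have -> : @dyadic R = (fun p : int * nat => p.1%:~R / 2 ^+ p.2) @` setT.
  apply/seteqP; split => [q [z [k ->]]|_ [[z k] _ <-]]; first by exists (z, k).
  by exists z, k.
exact: (card_le_trans (card_image_le _ _) (countableP _)).
Qed.

Lemma exists_pow2_gt {R : archiRealFieldType} (v : R) : exists p, v < 2 ^+ p.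
Proof.
have [v0|v0] := ltP v 0; first by exists 0%N; rewrite expr0 (lt_trans v0).
exists (Num.Def.archi_bound v); apply: lt_trans (archi_boundP v0) _.
by rewrite -natrX ltr_nat ltn_expl.
Qed.

Lemma pow2_bracket {R : archiRealFieldType} {v : R} :
  1 < v -> ~ dyadic v -> exists k, 2 ^+ k < v < 2 ^+ k.+1.
Proof.
move=> v1 ndv.
have pow2_gt : exists p, `[< v < 2 ^+ p >].
  by have [p vp] := exists_pow2_gt v; exists p; exact/asboolP.
case: (ex_minnP pow2_gt) => -[|k] /asboolP vk kmin.
  by rewrite expr0 in vk; lra.
exists k; rewrite vk andbT lt_neqAle; apply/andP; split.
  by apply/eqP => e; apply: ndv; rewrite -e; exact: dyadic_pow2.
by rewrite leNgt; apply/negP => /asboolT /kmin; rewrite ltnn.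
Qed.

Lemma countable_dyadic_scaled {R : realFieldType} (a : R) :
  a != 0 -> countable [set u : R | dyadic (u / a)].
Proof.
move=> a0; have -> : [set u : R | dyadic (u / a)] = ( *%R a) @` dyadic.
  apply/seteqP; split => [u du|_ [q dq <-]]; last by rewrite /= mulrAC divff // mul1r.
  by exists (u / a) => //; rewrite mulrC divfK.
exact: (card_le_trans (card_image_le _ _) (countable_dyadic R)).
Qed.

Lemma ceil_log2_bound {R : realType} {v : R} : 1 < v -> ~ dyadic v ->
  exists2 p : nat, p%:Z = Num.ceil (ln v / ln 2) & v < 2 ^+ p.
Proof.
move=> v1 ndv; set L := ln v / ln 2.
have ln2 : 0 < ln (2 : R) by rewrite ln_gt0 // ltr1n.
have L0 : 0 <= L by rewrite divr_ge0 // ?ltW // ln_gt0.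
have c0 : 0 <= Num.ceil L by rewrite ceil_ge0 (lt_le_trans _ L0) // ltrN10.
set p := `|Num.ceil L|%N; have ep : p%:Z = Num.ceil L by rewrite gez0_abs.
exists p => //; rewrite lt_neqAle; apply/andP; split.
  by apply/eqP => e; apply: ndv; rewrite e; exact: dyadic_pow2.
have Lp : L <= p%:R by rewrite -[_%:R]/((p%:Z)%:~R) ep ceil_ge.
have v0 : 0 < v by rewrite (lt_trans ltr01).
rewrite -ler_ln ?posrE ?exprn_gt0 ?ltr0n // lnXn //.
by rewrite -(mulr_natr (ln 2)) mulrC -ler_pdivrMr.
Qed.

Definition ls_stops {R : realType} {n : nat} (f : 'rV[R]_n -> R) (c1 c2 : R)
  (x d : 'rV[R]_n) (k : nat) : Prop :=
  armijo f c1 x d (ls_t f c1 x d k) /\ wolfe f c2 x d (ls_t f c1 x d k).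

(* The profile of f_a along -grad f_a: piecewise linear with a kink at v.
   Trial steps are dyadic, so a non-dyadic kink is never hit. *)
Definition ls_kink {R : realType} {n : nat} (f : 'rV[R]_n -> R) (c1 c2 : R)
  (x d : 'rV[R]_n) (v : R) : Prop :=
  [/\ 0 < v, ~ dyadic v,
      forall t, 0 <= t -> t != v -> (wolfe f c2 x d t <-> v < t),
      forall t, 0 <= t -> t < v -> armijo f c1 x d t &
      forall t, v < t -> t <= 2 * v -> armijo f c1 x d t].

Section bracketing_line_search.
Context {R : realType} {n : nat} {f : 'rV[R]_n -> R} {c1 c2 : R} {x d : 'rV[R]_n}.

Local Notation state := (ls_state f c1 x d).
Local Notation trial := (ls_t f c1 x d).
Local Notation stops := (ls_stops f c1 c2 x d).

Lemma ls_state_inv i :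
  let: (al, be, t) := state i in
  [/\ dyadic al, dyadic t, forall b, be = Some b -> dyadic b /\ t < b,
      0 <= al & al < t].
Proof.
elim: i => [|i]; first by split => //; [exact: dyadic0 | exact: dyadic1].
rewrite /ls_state iterS -/(state i).
case: (state i) => [[al be] t] [Dal Dt Hb al0 alt] /=.
case: asboolP => _ /=; last first.
  split => //; [by apply/dyadic_half/dyadicD| move=> _ [<-]; split => //; lra | lra].
case: be Hb => [b|] Hb /=.
  have [Db tb] := Hb b erefl.
  split => //; [by apply/dyadic_half/dyadicD| move=> _ [<-]; split => //; lra | lra | lra].
split => //; [by apply: dyadicM => //; exact: (dyadic_nat _ 2) | lra | lra].
Qed.

Lemma ls_t_dyadic i : dyadic (trial i).
Proof. by have := ls_state_inv i; rewrite /ls_t; case: (state i) => [[al be] t] []. Qed.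

Lemma ls_t_gt0 i : 0 < trial i.
Proof.
have := ls_state_inv i; rewrite /ls_t.
by case: (state i) => [[al be] t] [_ _ _ al0 alt] /=; lra.
Qed.

Lemma ls_returns_unique t t' :
  ls_returns f c1 c2 x d t -> ls_returns f c1 c2 x d t' -> t = t'.
Proof.
move=> [k [<- A W first]] [k' [<- A' W' first']].
have [kk'|k'k|-> //] := ltngtP k k'.
  by case: (first' k kk').
by case: (first k' k'k).
Qed.

Lemma ls_returns_first_stop : (exists k, stops k) ->
  exists t, ls_returns f c1 c2 x d t.
Proof.
move=> [k sk]; have ex : exists k, `[< stops k >] by exists k; exact/asboolP.
case: (ex_minnP ex) => j /asboolP [Aj Wj] jmin.
exists (trial j), j; split => // i ij si.
by have := jmin i (asboolT si); rewrite leqNgt ij.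
Qed.

Context {v : R}.
Hypothesis kink : ls_kink f c1 c2 x d v.

Lemma ls_t_neq_kink i : trial i != v.
Proof.
case: kink => _ ndv _ _ _; apply/eqP => e; apply: ndv; rewrite -e.
exact: ls_t_dyadic.
Qed.

Lemma wolfe_ls_t i : wolfe f c2 x d (trial i) <-> v < trial i.
Proof. by case: kink => _ _ W _ _; apply: W; [exact/ltW/ls_t_gt0 | exact: ls_t_neq_kink]. Qed.

Lemma ls_state_doubling k i : 2 ^+ k < v -> (i <= k.+1)%N ->
  (state i).1.2 = None /\ trial i = 2 ^+ i.
Proof.
case: kink => _ _ _ Abelow _ kv.
elim: i => [//|i IH] ik.
have [be_none ti] := IH (ltnW ik).
rewrite /ls_t /ls_state iterS -/(state i); move: be_none ti; rewrite /ls_t.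
case: (state i) => [[al be] t] /= -> ->.
have tv : (2 : R) ^+ i < v by apply: le_lt_trans kv; rewrite ler_eXn2l //; lra.
case: asboolP => [_|]; first by rewrite exprS.
by case; apply: Abelow tv; exact: exprn_ge0.
Qed.

Lemma ls_returns_doubling k : 2 ^+ k < v < 2 ^+ k.+1 ->
  ls_returns f c1 c2 x d (2 ^+ k.+1).
Proof.
case: kink => _ _ _ _ Aabove /andP[kv vk].
have [_ tk] := ls_state_doubling _ _ kv (leqnn k.+1).
exists k.+1; split => //.
- by apply: Aabove => //; rewrite exprS; lra.
- by rewrite -tk; apply/wolfe_ls_t; rewrite tk.
move=> j jk [_ /wolfe_ls_t].
rewrite (ls_state_doubling _ _ kv (ltnW jk)).2.
have : (2 : R) ^+ j <= 2 ^+ k by rewrite ler_eXn2l //; lra.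
lra.
Qed.

Lemma ls_state_bisection i : v < 1 -> (forall j, (j <= i)%N -> ~ stops j) ->
  let: (al, be, t) := state i.+1 in
  exists2 b, be = Some b &
    [/\ t = (al + b) / 2, 0 <= al < v, 2 * v < b <= 1 & (b - al) * 2 ^+ i = 1].
Proof.
case: kink => v0 _ _ Abelow Aabove v1.
elim: i => [|i IH] nostop.
  have not_armijo1 : ~ armijo f c1 x d 1.
    move=> A1; apply: (nostop 0%N) => //; split => //.
    by apply/wolfe_ls_t.
  rewrite /ls_state /= /ls_next /=.
  case: asboolP => // _ /=; exists 1 => //; split => //.
  - by rewrite lexx v0.
  - rewrite lexx andbT ltNge; apply/negP => v2; apply: not_armijo1.
    exact: Aabove.
  - by rewrite subr0 mulr1.
have W := wolfe_ls_t i.+1; have t_neq_v := ls_t_neq_kink i.+1.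
move: (IH (fun j ji => nostop j (leqW ji))) (nostop i.+1 (leqnn _)) W t_neq_v.
rewrite /ls_stops /ls_t [state i.+2]/ls_state iterS -/(state i.+1).
case: (state i.+1) => [[al be] t] /= [b -> [-> /andP[al0 alv] /andP[vb b1] len]].
move=> nstop W t_neq_v; rewrite /ls_next.
case: asboolP => At /=.
  have tv : (al + b) / 2 < v.
    rewrite lt_neqAle t_neq_v /= leNgt; apply/negP => vt.
    by apply: nstop; split => //; apply/W.
  exists b => //; split => //; first by apply/andP; split => //; lra.
  - by rewrite vb b1.
  - by rewrite exprS; nra.
have vt : v < (al + b) / 2.
  rewrite lt_neqAle eq_sym t_neq_v /= leNgt; apply/negP => tv.
  by apply: At; apply: Abelow => //; lra.
exists ((al + b) / 2) => //; split => //; first by rewrite al0 alv.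
- apply/andP; split; last by lra.
  by rewrite ltNge; apply/negP => t2v; apply: At; exact: Aabove.
- by rewrite exprS; nra.
Qed.

(* The bracket [al, b] has length 2^-i yet contains [v, 2v]. *)
Lemma ls_bisection_stops : v < 1 -> exists k, stops k.
Proof.
move=> v1; apply: contrapT => nostop.
have [v0 _ _ _ _] := kink.
have [i vi] := exists_pow2_gt v^-1.
have := ls_state_bisection i v1 (fun j _ s => nostop (ex_intro _ j s)).
case: (state i.+1) => [[al be] t] [b _ [_ /andP[al0 alv] /andP[vb _] len]].
have : 1 < v * 2 ^+ i by rewrite -ltr_pdivrMl // mulr1.
have : 0 < (2 : R) ^+ i by exact: exprn_gt0.
nra.
Qed.

Lemma ls_returns_le1 t : v < 1 -> ls_returns f c1 c2 x d t -> t <= 1.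
Proof.
move=> v1 [[|i] [<- _ _ first]]; first by [].
have := ls_state_bisection i v1 (fun j ji => first j ji).
rewrite /ls_t; case: (state i.+1) => [[al be] s] /=.
by case=> b _ [-> /andP[_ alv] /andP[_ b1] _]; lra.
Qed.

Lemma ls_returns_exists : exists t, ls_returns f c1 c2 x d t.
Proof.
have [_ ndv _ _ _] := kink.
have [v1|v1|v1] := ltgtP v 1.
- exact/ls_returns_first_stop/ls_bisection_stops.
- by have [k /ls_returns_doubling] := pow2_bracket v1 ndv; exists (2 ^+ k.+1).
- by case: ndv; rewrite v1; exact: dyadic1.
Qed.

Lemma ls_returns_gt_kink t : ls_returns f c1 c2 x d t -> v < t.
Proof. by move=> [k [<- _ /wolfe_ls_t]]. Qed.

Lemma ls_returns_near_kink p t : v < 2 ^+ p.+1 ->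
  ls_returns f c1 c2 x d t -> `|v - t| < 2 ^+ p.
Proof.
have [v0 ndv _ _ _] := kink.
move=> vp ret; have vt := ls_returns_gt_kink _ ret.
rewrite distrC ger0_norm; last by rewrite subr_ge0 ltW.
have [v1|v1|v1] := ltgtP v 1.
- have := ls_returns_le1 _ v1 ret.
  have : 1 <= (2 : R) ^+ p by rewrite exprn_ege1 ?ler1n.
  lra.
- have [k kv] := pow2_bracket v1 ndv; have /andP[kv1 kv2] := kv.
  rewrite (ls_returns_unique _ _ ret (ls_returns_doubling _ kv)).
  have kp : (k < p.+1)%N by rewrite -(@ltr_eXn2l R 2) ?ltr1n // (lt_trans kv1).
  have : (2 : R) ^+ k <= 2 ^+ p by rewrite ler_eXn2l ?ltr1n.
  by rewrite exprS; lra.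
- by case: ndv; rewrite v1; exact: dyadic1.
Qed.

End bracketing_line_search.

Lemma near_eq_diff {R : realType} {V W : normedModType R} (f g : V -> W) x :
  (\forall y \near x, f y = g y) -> differentiable g x ->
  differentiable f x /\ 'd f x = 'd g x :> (V -> W).
Proof.
move=> fg dg.
have fx : f x = g x := nbhs_singleton fg.
have f_expansion : f \o shift x = cst (f x) + 'd g x +o_ 0 id.
  apply/eqaddoP => e e0.
  have := (eqaddoP _ _ _ _).1 (diff_locally dg) e e0.
  move: fg; rewrite (near_shift 0 x) => fg.
  by apply: filterS2 fg => z /=; rewrite subr0 fx => h; rewrite !fctE /= h.
have dfg : 'd f x = 'd g x :> (V -> W) := diff_unique (diff_continuous dg) f_expansion.
split => //.
by apply/diff_locallyP; rewrite dfg; split => //; exact: diff_continuous.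
Qed.

Definition rdot {R : realType} {n : nat} (c y : 'rV[R]_n) : R :=
  \sum_j c 0 j * y 0 j.

Section rdot.
Context {R : realType} {n : nat} (c : 'rV[R]_n).

Lemma rdot_is_linear : linear (rdot c : 'rV[R]_n -> R^o).
Proof.
move=> k u v; rewrite /rdot scaler_sumr -big_split /=; apply: eq_bigr => j _.
by rewrite !mxE mulrDr mulrCA.
Qed.

HB.instance Definition _ := GRing.isLinear.Build R 'rV[R]_n R^o _ (rdot c) rdot_is_linear.

Lemma rdot_continuous : continuous (rdot c).
Proof.
apply: continuous_big => [|j _]; first exact: add_continuous.
by move=> y; apply: continuousM; [exact: cst_continuous | exact: coord_continuous].
Qed.

Lemma diff_rdot x : differentiable (rdot c) x /\ 'd (rdot c) x = rdot c :> (_ -> _).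
Proof.
by split; [exact/linear_differentiable/rdot_continuous | exact/diff_lin/rdot_continuous].
Qed.

End rdot.

Section fa_gradient.
Context {R : realType} {m : nat} (a : R).
Implicit Types (x y : 'rV[R]_m.+1) (s t : R).

Definition tail_sum y : R := \sum_(i < m) y 0 (lift ord0 i).

Definition fa_slope s : 'rV[R]_m.+1 := \row_j (if j == ord0 then a * s else 1).

Lemma coord1E y : coord1 y = y 0 ord0.
Proof. by rewrite /coord1 big_mkcond big_ord_recl /= big1 ?addr0. Qed.

Lemma faE y : fa a y = a * `|y 0 ord0| + tail_sum y.
Proof. by rewrite /fa big_ord_recl. Qed.

Lemma rdot_fa_slope s y : rdot (fa_slope s) y = a * s * y 0 ord0 + tail_sum y.
Proof.
rewrite /rdot big_ord_recl !mxE eqxx; congr (_ + _).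
by apply: eq_bigr => i _; rewrite !mxE mul1r.
Qed.

Lemma tail_sum_ray x s t : tail_sum (x + t *: - fa_slope s) = tail_sum x - t * m%:R.
Proof.
have -> : m%:R = \sum_(i < m) (1 : R) by rewrite sumr_const card_ord.
rewrite /tail_sum mulr_sumr -sumrB.
by apply: eq_bigr => i _; rewrite !mxE mulrN mulr1.
Qed.

Lemma rdot_fa_slope_opp s' s :
  rdot (fa_slope s') (- fa_slope s) = - (a ^+ 2 * (s' * s)) - m%:R.
Proof.
rewrite rdot_fa_slope !mxE eqxx /tail_sum (eq_bigr (fun=> -1)); last first.
  by move=> i _; rewrite !mxE.
by rewrite sumrN sumr_const card_ord; congr (_ - _); ring.
Qed.

Lemma fa_near_rdot x : x 0 ord0 != 0 ->
  \forall y \near x, fa a y = rdot (fa_slope (Num.sg (x 0 ord0))) y.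
Proof.
move=> x0; have x0_gt0 : 0 < `|x 0 ord0| by rewrite normr_gt0.
have := @cvgr_dist_lt _ _ _ (nbhs x) (nbhs_filter x) _ _
  (@coord_continuous _ _ _ 0 ord0 x) _ x0_gt0.
apply: filterS => y /= /ltr_normlP [y1 y2].
rewrite faE rdot_fa_slope -!mulrA; congr (_ * _ + _).
have [x_lt0|x_gt0|] := ltgtP (x 0 ord0) 0; last by move/eqP: x0.
- rewrite ltr0_sg // ltr0_norm // in y1 y2 *; rewrite ltr0_norm; lra.
- rewrite gtr0_sg // gtr0_norm // in y1 y2 *; rewrite gtr0_norm; lra.
Qed.

Lemma diff_fa x : x 0 ord0 != 0 ->
  differentiable (fa a) x /\
  'd (fa a) x = rdot (fa_slope (Num.sg (x 0 ord0))) :> (_ -> _).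
Proof.
move=> x0; have [dl dlE] := diff_rdot (fa_slope (Num.sg (x 0 ord0))) x.
have [df dfE] := near_eq_diff _ _ _ (fa_near_rdot _ x0) dl.
by split => //; rewrite dfE dlE.
Qed.

Lemma grad_fa x : x 0 ord0 != 0 -> grad (fa a) x = fa_slope (Num.sg (x 0 ord0)).
Proof.
move=> x0; apply/rowP => j; rewrite /grad mxE (diff_fa _ x0).2 /rdot (bigD1 j) //=.
rewrite !mxE !eqxx mulr1 big1 ?addr0 // => k /negbTE kj.
by rewrite !mxE kj mulr0.
Qed.

End fa_gradient.

Section fa_descent.
Context {R : realType} {m : nat} {a c1 c2 : R}.
Hypotheses (a_gt0 : 0 < a) (m_le_a2 : m%:R <= a ^+ 2) (c1_gt0 : 0 < c1)
  (c1_lt_c2 : c1 < c2) (c2_lt1 : c2 < 1) (tau_le0 : c1 * (a ^+ 2 + m%:R) <= m%:R).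
Implicit Types (x y : 'rV[R]_m.+1) (t : R).

Local Notation ray x t := (x + t *: - grad (fa a) x).
Local Notation kink x := (`|x 0 ord0| / a).

Lemma ray_coord0 x t : x 0 ord0 != 0 ->
  (ray x t) 0 ord0 = Num.sg (x 0 ord0) * (a * (kink x - t)).
Proof.
move=> x0; rewrite grad_fa // !mxE eqxx {1}[x 0 ord0]numEsg.
by field; rewrite gt_eqF.
Qed.

Lemma norm_ray_coord0 x t : x 0 ord0 != 0 ->
  `|(ray x t) 0 ord0| = a * `|kink x - t|.
Proof.
by move=> x0; rewrite ray_coord0 // normrM normr_sg x0 mul1r normrM gtr0_norm.
Qed.

Lemma slope_fa_at x y : x 0 ord0 != 0 -> y 0 ord0 != 0 ->
  'd (fa a) y (- grad (fa a) x) =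
  - (a ^+ 2 * (Num.sg (y 0 ord0) * Num.sg (x 0 ord0))) - m%:R.
Proof. by move=> x0 y0; rewrite (diff_fa a _ y0).2 grad_fa // rdot_fa_slope_opp. Qed.

Lemma slope_fa x : x 0 ord0 != 0 ->
  'd (fa a) x (- grad (fa a) x) = - (a ^+ 2 + m%:R).
Proof. by move=> x0; rewrite slope_fa_at // -expr2 sqr_sg x0 mulr1 opprD. Qed.

Lemma armijo_fa x t : x 0 ord0 != 0 ->
  armijo (fa a) c1 x (- grad (fa a) x) t <->
  a ^+ 2 * `|kink x - t| - t * m%:R <= a ^+ 2 * kink x - c1 * t * (a ^+ 2 + m%:R).
Proof.
move=> x0; rewrite /armijo slope_fa // !faE norm_ray_coord0 //.
rewrite grad_fa // tail_sum_ray; set v := kink x.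
have -> : `|x 0 ord0| = a * v by rewrite mulrC divfK ?gt_eqF.
rewrite -[in X in X <-> _]subr_ge0 -[in X in _ <-> X]subr_ge0.
suff -> : a * (a * v) + tail_sum x + c1 * t * - (a ^+ 2 + m%:R) -
    (a * (a * `|v - t|) + (tail_sum x - t * m%:R)) =
  a ^+ 2 * v - c1 * t * (a ^+ 2 + m%:R) - (a ^+ 2 * `|v - t| - t * m%:R) by [].
ring.
Qed.

Lemma wolfe_fa x t : x 0 ord0 != 0 -> t != kink x ->
  wolfe (fa a) c2 x (- grad (fa a) x) t <->
  - (c2 * (a ^+ 2 + m%:R)) <= - (a ^+ 2 * Num.sg (kink x - t)) - m%:R.
Proof.
move=> x0 tk.
have y0 : (ray x t) 0 ord0 != 0.
  by rewrite -normr_gt0 norm_ray_coord0 // pmulr_rgt0 // normr_gt0 subr_eq0 eq_sym.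
have sg_y0 : Num.sg ((ray x t) 0 ord0) * Num.sg (x 0 ord0) = Num.sg (kink x - t).
  rewrite ray_coord0 // !sgrM sgr_id (gtr0_sg a_gt0) mul1r mulrAC -expr2 sqr_sg x0.
  by rewrite mul1r.
have dy := (diff_fa a _ y0).1.
(* Abstracting the trial point keeps rewriting from unifying it with x, which
   is very slow. *)
rewrite /wolfe; set y := ray x t in y0 sg_y0 dy *; clearbody y.
rewrite [leRHS](slope_fa_at _ _ x0 y0) [in leLHS](slope_fa _ x0) sg_y0.
by rewrite mulrN; split => [[]|].
Qed.

Lemma coord0_neq0 x : ~ dyadic (x 0 ord0 / a) -> x 0 ord0 != 0.
Proof. by apply: contra_not_neq => ->; rewrite mul0r; exact: dyadic0. Qed.

Lemma kink_not_dyadic x : ~ dyadic (x 0 ord0 / a) -> ~ dyadic (kink x).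
Proof.
by move=> ndx; rewrite -[X in X^-1](gtr0_norm a_gt0) -normf_div => /dyadic_norm.
Qed.

Lemma ls_kink_fa x : ~ dyadic (x 0 ord0 / a) ->
  ls_kink (fa a) c1 c2 x (- grad (fa a) x) (kink x).
Proof.
move=> ndx; have x0 := coord0_neq0 _ ndx.
have k0 : 0 < kink x by rewrite divr_gt0 // normr_gt0.
have a2m : 0 < a ^+ 2 + m%:R by rewrite ltr_wpDr ?exprn_gt0.
have c2a2m : 0 < c2 * (a ^+ 2 + m%:R) by rewrite mulr_gt0 // (lt_trans c1_gt0).
split => //; first exact: kink_not_dyadic.
- move=> t t0 tk; rewrite wolfe_fa //.
  have [kt|tk'] := ltP (kink x) t.
    rewrite ltr0_sg ?subr_lt0 // mulrN1 opprK; split => // _.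
    apply: (@le_trans _ _ 0); first by rewrite oppr_le0 ltW.
    by rewrite subr_ge0.
  rewrite gtr0_sg ?subr_gt0 ?lt_neqAle ?tk ?tk' // mulr1 -opprD lerN2.
  by rewrite leNgt gtr_pMl // c2_lt1.
- move=> t t0 tk; apply/armijo_fa => //.
  rewrite ger0_norm; last by rewrite subr_ge0 ltW.
  have : c1 * (t * (a ^+ 2 + m%:R)) <= t * (a ^+ 2 + m%:R).
    by rewrite ler_piMl ?mulr_ge0 ?(ltW a2m) // ltW // (lt_trans c1_lt_c2).
  set A := a ^+ 2; lra.
- move=> t kt t2k; apply/armijo_fa => //.
  rewrite ler0_norm; last by rewrite subr_le0 ltW.
  have t0 : 0 <= t by rewrite ltW // (lt_trans k0).
  have : t * (c1 * (a ^+ 2 + m%:R)) <= t * m%:R by rewrite ler_wpM2l.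
  have : a ^+ 2 * t <= a ^+ 2 * (2 * kink x) by rewrite ler_wpM2l ?sqr_ge0.
  set A := a ^+ 2; lra.
Qed.

Lemma fa_step_not_dyadic x t : ~ dyadic (x 0 ord0 / a) ->
  ls_returns (fa a) c1 c2 x (- grad (fa a) x) t -> ~ dyadic ((ray x t) 0 ord0 / a).
Proof.
move=> ndx [k [<- _ _ _]] dy; have x0 := coord0_neq0 _ ndx; apply: ndx.
have -> : x 0 ord0 / a =
    (ray x (ls_t (fa a) c1 x (- grad (fa a) x) k)) 0 ord0 / a +
    Num.sg (x 0 ord0) * ls_t (fa a) c1 x (- grad (fa a) x) k.
  by rewrite ray_coord0 // {1}[x 0 ord0]numEsg; field; rewrite gt_eqF.
by apply: dyadicD dy _; apply: dyadicM; [exact: dyadic_sg | exact: ls_t_dyadic].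
Qed.

Lemma fa_step_kink x t p : ~ dyadic (x 0 ord0 / a) ->
  ls_returns (fa a) c1 c2 x (- grad (fa a) x) t ->
  kink x < 2 ^+ p.+1 -> kink (ray x t) < 2 ^+ p.
Proof.
move=> ndx ret xp.
rewrite norm_ray_coord0 ?coord0_neq0 // [a * _]mulrC mulfK ?gt_eqF //.
exact: ls_returns_near_kink (ls_kink_fa _ ndx) _ _ xp ret.
Qed.

Lemma fa_gd_iterates_exist x0 : ~ dyadic (x0 0 ord0 / a) ->
  exists xs, gd_iterates (fa a) c1 c2 x0 xs.
Proof.
move=> nd0.
pose t_of x := xget 0 [set t | ls_returns (fa a) c1 c2 x (- grad (fa a) x) t].
have t_ofP x : ~ dyadic (x 0 ord0 / a) ->
    ls_returns (fa a) c1 c2 x (- grad (fa a) x) (t_of x).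
  by move=> ndx; apply: xgetPex; exact: ls_returns_exists (ls_kink_fa _ ndx).
pose xs k := iter k (fun x => ray x (t_of x)) x0.
have ndxs k : ~ dyadic (xs k 0 ord0 / a).
  by elim: k => [//|k IH]; exact: fa_step_not_dyadic _ _ IH (t_ofP _ IH).
exists xs; split => // k; split; first exact: (diff_fa a _ (coord0_neq0 _ (ndxs k))).1.
by exists (t_of (xs k)); split => //; exact: t_ofP.
Qed.

Lemma fa_gd_iterates_not_dyadic x0 xs : gd_iterates (fa a) c1 c2 x0 xs ->
  ~ dyadic (x0 0 ord0 / a) -> forall k, ~ dyadic (xs k 0 ord0 / a).
Proof.
move=> [<- xsS] nd0; elim => [//|k IH].
by have [_ [t [ret ->]]] := xsS k; exact: fa_step_not_dyadic _ _ IH ret.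
Qed.

Lemma fa_gd_iterates_kink x0 xs p : gd_iterates (fa a) c1 c2 x0 xs ->
  ~ dyadic (x0 0 ord0 / a) -> kink x0 < 2 ^+ p ->
  forall k, kink (xs k) < 2 ^+ (p - k).
Proof.
move=> gd nd0 x0p; have nd := fa_gd_iterates_not_dyadic _ _ gd nd0.
case: gd => x0E xsS; elim => [|k IH]; first by rewrite subn0 x0E.
have [_ [t [ret ->]]] := xsS k; apply: fa_step_kink _ _ _ (nd k) ret _.
have [kp|pk] := ltnP k p; first by rewrite subnSK.
have -> : (p - k.+1 = 0)%N by apply/eqP; rewrite subn_eq0 (leq_trans pk).
move: IH; have -> : (p - k = 0)%N by apply/eqP; rewrite subn_eq0.
by rewrite expr0 expr1 => /lt_trans; apply; rewrite ltr1n.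
Qed.

Lemma fa_gd_enters_strip x0 : ~ dyadic (x0 0 ord0 / a) -> a < `|x0 0 ord0| ->
  exists2 xs, gd_iterates (fa a) c1 c2 x0 xs &
  exists2 p : nat, p%:Z = Num.ceil (ln (kink x0) / ln 2) &
    forall k, (p <= k)%N -> `|xs k 0 ord0| < a.
Proof.
move=> nd0 x0_gt_a; have [xs gd] := fa_gd_iterates_exist _ nd0.
have x0_gt1 : 1 < kink x0 by rewrite ltr_pdivlMr // mul1r.
have [p ep x0p] := ceil_log2_bound x0_gt1 (kink_not_dyadic _ nd0).
exists xs => //; exists p => // k pk.
have := fa_gd_iterates_kink _ _ _ gd nd0 x0p k.
by rewrite (eqP (_ : p - k == 0)%N) ?subn_eq0 // expr0 ltr_pdivrMr // mul1r.
Qed.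

End fa_descent.

Theorem theorem3 (R : realType) (n : nat) (a c1 c2 : R) :
  (2 <= n)%N ->
  Num.sqrt (n.-1)%:R <= a ->
  0 < c1 -> c1 < c2 -> c2 < 1 ->
  c1 + (n.-1)%:R * (c1 - 1) / a ^+ 2 <= 0 ->
  gauss_null
    [set t : n.-tuple R |
      a < `|coord1 (row_of_tuple t)| /\
      ~ (exists xs : nat -> 'rV[R]_n,
           gd_iterates (fa a) c1 c2 (row_of_tuple t) xs /\
           exists j : nat,
             [/\ (j%:Z <= Num.ceil (ln (`|coord1 (row_of_tuple t)| / a) / ln 2))%R,
                 `|coord1 (xs j)| < a &
                 forall k : nat, (j <= k)%N -> `|coord1 (xs k)| < a])].
Proof.
case: n => [//|m] m_gt0 /= sqrt_m_le_a c1_gt0 c1_lt_c2 c2_lt1 tau_le0.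
have a_gt0 : 0 < a by apply: lt_le_trans sqrt_m_le_a; rewrite sqrtr_gt0 ltr0n.
have m_le_a2 : m%:R <= a ^+ 2.
  by rewrite -(@sqr_sqrtr _ m%:R) // lerXn2r // ?nnegrE ?sqrtr_ge0 // (ltW a_gt0).
have {}tau_le0 : c1 * (a ^+ 2 + m%:R) <= m%:R.
  move: tau_le0; rewrite -(pmulr_lle0 _ (exprn_gt0 2 a_gt0)).
  have -> : (c1 + m%:R * (c1 - 1) / a ^+ 2) * a ^+ 2 = c1 * (a ^+ 2 + m%:R) - m%:R.
    by field; rewrite gt_eqF.
  by rewrite subr_le0.
have null := gauss_null_tnth0 R m _ (countable_dyadic_scaled a (lt0r_neq0 a_gt0)).
apply: (gauss_nullS _ null) => t /= [x0_gt_a bad]; apply: contrapT => nd0.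
apply: bad; set x0 := row_of_tuple t.
have x0E : x0 0 ord0 = tnth t ord0 by rewrite mxE.
rewrite /= -x0E in nd0; rewrite !coord1E in x0_gt_a *.
have [xs gd [p ep small]] :=
  fa_gd_enters_strip a_gt0 m_le_a2 c1_gt0 c1_lt_c2 c2_lt1 tau_le0 _ nd0 x0_gt_a.
exists xs; split => //; exists p.
by split => [|| k pk]; rewrite ?coord1E ?ep //; exact: small.
Qed.
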